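(* Let $p$ be a prime, $\varepsilon>0$, $0<\alpha\le1$, and let $N=p^{1/12-\varepsilon}$ (a positive integer). If $S$ is chosen from $\mathcal{S}(N,12)$, then with probability at least $1-6p^{-12\varepsilon}$, $$\mathcal{C}_\alpha(S)>\left(\alpha|S|/\sqrt[3]{4}\right)^{3/5}.$$
   Context: $\mathcal{S}(N,k)$ denotes the random subset $S=\{x_1,\dots,x_N\}\subseteq\mathbb{Z}_p$, where $x_1,\dots,x_N$ are $k$-wise independent random variables each uniformly distributed on $\mathbb{Z}_p$. For $L\subseteq\mathbb{Z}_p^2$, $I(L)=\{x\in\mathbb{Z}_p\mid \exists (a,b),(a',b')\in L,\ (a,b)\neq(a',b'),\ ax+b=a'x+b'\}$. For $S\subseteq\mathbb{Z}_p$ and $0<\alpha\leq1$, the generic $\alpha$-complexity $\mathcal{C}_\alpha(S)$ is the smallest cardinality of a set $L\subseteq\mathbb{Z}_p^2$ with $|S\cap I(L)|\geq\alpha|S|$. *)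

From HB Require Import structures.
From mathcomp Require Import all_boot all_order all_algebra.
From mathcomp Require Import reals exp.
Set Implicit Arguments. Unset Strict Implicit. Unset Printing Implicit Defensive.
Import Order.TTheory GRing.Theory Num.Theory.
Local Open Scope ring_scope.

(* Lines y = a x + b in Z_p^2 are represented by pairs (a,b). *)
Definition Ipts (p : nat) (L : {set 'F_p * 'F_p}) : {set 'F_p} :=
  [set x : 'F_p | [exists l1 in L, exists l2 in L,
     (l1 != l2) && (l1.1 * x + l1.2 == l2.1 * x + l2.2)]].

Definition alpha_good (R : realType) (p : nat) (alpha : R) (S : {set 'F_p})
  (L : {set 'F_p * 'F_p}) : bool :=
  alpha * (#|S|%:R) <= (#|S :&: Ipts L|%:R : R).

(* Generic alpha-complexity: the minimum of #|L| over good L.  The default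
   value #|Z_p^2| is itself attained (the full set of lines is good when
   alpha <= 1), so this is the true minimum. *)
Definition Calpha (R : realType) (p : nat) (alpha : R) (S : {set 'F_p}) : nat :=
  \big[minn/#|[set: 'F_p * 'F_p]|]_(L : {set 'F_p * 'F_p} | alpha_good alpha S L) #|L|.

Definition is_distribution (R : realType) (p N : nat)
  (mu : {ffun 'I_N -> 'F_p} -> R) : Prop :=
  (forall w, 0 <= mu w) /\ \sum_(w : {ffun 'I_N -> 'F_p}) mu w = 1.

Definition kwise_uniform (R : realType) (p N k : nat)
  (mu : {ffun 'I_N -> 'F_p} -> R) : Prop :=
  forall (I : {set 'I_N}) (a : {ffun 'I_N -> 'F_p}), (#|I| <= k)%N ->
    \sum_(w : {ffun 'I_N -> 'F_p} | [forall i in I, w i == a i]) mu w = ((p%:R : R) ^+ #|I|)^-1.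

Definition setS (p N : nat) (w : {ffun 'I_N -> 'F_p}) : {set 'F_p} :=
  [set w i | i : 'I_N].

From HB Require Import structures.
From mathcomp Require Import all_boot all_order all_algebra.
From mathcomp Require Import reals exp.
From mathcomp Require Import ring lra zify.
Import Order.TTheory GRing.Theory Num.Theory.
Set Implicit Arguments. Unset Strict Implicit. Unset Printing Implicit Defensive.

(* Suppose C_alpha(S) <= (alpha |S| / 4^(1/3))^(3/5) and let L be an optimal
   set of m lines, so that X := S :&: I(L) satisfies 4 m^5 <= |X|^3.  Choosing
   for each x in X two lines of L through x makes X the edge set of a simple
   graph on L, and the Kovari-Sos-Turan count (convexity of 'C(d, 3)) yields a
   copy of K_{3,4}: lines A_0, A_1, A_2 and B_0, ..., B_3 such that A_i and B_j
   meet at a point x_ij of S, the twelve points being distinct.  The three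
   vector (A_1 - A_0, A_2 - A_0) of F_p^4 is then a nonzero solution of a 4x4
   linear system whose j-th row depends only on x_0j, x_1j, x_2j, so its
   determinant D(x_ij) vanishes.  D is affine in each variable
   and has at most 6 p^11 zeros.  By 12-wise independence each injective
   choice of 12 of the x_k is uniform on F_p^12, and a union bound over the
   N^12 choices gives probability at most 6 N^12 / p = 6 p^(-12 eps). *)

Lemma bin3_addn_ge k n : 'C(k, 3) + n * 'C(k, 2) <= 'C(k + n, 3).
Proof.
elim: n => [|n IH]; first by rewrite addn0 mul0n addn0.
have : 'C(k, 2) <= 'C(k + n, 2) by apply: leq_bin2l; rewrite leq_addr.
rewrite addnS binS mulSn; lia.
Qed.

Lemma bin3_addn_le k n : 'C(k + n, 3) <= 'C(k, 3) + n * 'C(k + n, 2).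
Proof.
elim: n => [|n IH]; first by rewrite addn0 mul0n addn0.
have h : 'C(k + n, 2) <= 'C((k + n).+1, 2) by apply: leq_bin2l.
rewrite addnS binS mulSn; have := leq_mul (leqnn n) h; lia.
Qed.

(* At integers, the convex function ['C(_, 3)] lies above its secant through
   [k] and [k + 1], whose slope is ['C(k, 2)]. *)
Lemma bin3_secant d k : 'C(k, 3) + 'C(k, 2) * d <= 'C(d, 3) + 'C(k, 2) * k.
Proof.
have [kd|/ltnW dk] := leqP k d.
  by rewrite -(subnKC kd); have := bin3_addn_ge k (d - k); nia.
by rewrite -(subnKC dk); have := bin3_addn_le d (k - d); nia.
Qed.

Lemma sum_bin3_ge (I : finType) (A : {set I}) (d : I -> nat) k :
  k * #|A| <= \sum_(i in A) d i -> #|A| * 'C(k, 3) <= \sum_(i in A) 'C(d i, 3).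
Proof.
move=> kA.
have : \sum_(i in A) ('C(k, 3) + 'C(k, 2) * d i) <= \sum_(i in A) ('C(d i, 3) + 'C(k, 2) * k).
  by apply: leq_sum => i _; apply: bin3_secant.
rewrite !big_split /= -!big_distrr /= !sum_nat_const.
have := leq_mul (leqnn 'C(k, 2)) kA; nia.
Qed.

Lemma bin3_mul6 n : 'C(n, 3) * 6 = n * n.-1 * n.-2.
Proof. by rewrite bin_ffact !ffactnS ffactn0 muln1 mulnA. Qed.

Lemma bin3_gap m k : 4 <= m -> 32 * m ^ 2 < k.+1 ^ 3 -> 3 * 'C(m, 3) < m * 'C(k, 3).
Proof.
move=> m4 km.
have k6 : 6 <= k.-2.
  rewrite leqNgt; apply/negP => k7.
  have : k.+1 ^ 3 <= 8 ^ 3 by rewrite leq_exp2r //; lia.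
  have : 4 ^ 2 <= m ^ 2 by rewrite leq_exp2r.
  lia.
rewrite -(ltn_pmul2r (isT : 0 < 6)) -!mulnA !bin3_mul6.
have [t kt] : exists t, k = t.+2 by exists k.-2; lia.
have [s ms] : exists s, m = s.+2 by exists m.-2; lia.
subst k m; move: km k6; rewrite !expnS !expn0 /=; clear => km t6.
have : t.+3 * (t.+3 * t.+3) <= 8 * (t.+2 * (t.+1 * t)).
  clear km; have := leq_mul (leq_mul t6 (leqnn t)) (leqnn t); have := leq_mul t6 (leqnn t).
  nia.
nia.
Qed.

Lemma sum_bin3_gt (I : finType) (A : {set I}) (d : I -> nat) (E : nat) :
  \sum_(i in A) d i = 2 * E -> 0 < E -> E <= #|A| ^ 2 -> 4 * #|A| ^ 5 <= E ^ 3 ->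
  3 * 'C(#|A|, 3) < \sum_(i in A) 'C(d i, 3).
Proof.
move=> sum_d E0 Em E4; set m := #|A| in Em E4 *.
have m0 : 0 < m.
  by rewrite lt0n; apply/eqP => m0; move: Em; rewrite m0 exp0n //; lia.
have m4 : 4 <= m.
  have : 4 * m ^ 5 <= m * m ^ 5.
    by rewrite -expnS; apply: leq_trans E4 _; rewrite -[6]/(2 * 3) expnM leq_exp2r.
  by rewrite leq_pmul2r // expn_gt0 m0.
set k := (2 * E) %/ m.
apply: leq_trans (sum_bin3_ge (k := k) _); last by rewrite sum_d leq_divM.
have m3 : 0 < m ^ 3 by rewrite expn_gt0 m0.
apply: bin3_gap => //; rewrite -(ltn_pmul2r m3) -mulnA -expnD -expnMn.
have : (2 * E) ^ 3 < (k.+1 * m) ^ 3 by rewrite ltn_exp2r // ltn_ceil.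
rewrite expnMn; lia.
Qed.

Local Open Scope ring_scope.

Definition ffun_upd (T : finType) (U : Type) (y : {ffun T -> U}) (k : T) (c : U) :
  {ffun T -> U} := [ffun i => if i == k then c else y i].

Section AffineZeros.
Variables (F : finIdomainType) (T : finType).
Implicit Types (y : {ffun T -> F}) (P Q : {ffun T -> F} -> F).

Lemma card_ffun_upd0 k : #|[set ffun_upd y k 0 | y in {ffun T -> F}]| = (#|F| ^ #|T|.-1)%N.
Proof.
rewrite -(cardsC1 k) -[X in (X ^ _)%N]cardsT -(card_pffun_on 0); apply: eq_card => z.
apply/imsetP/pffun_onP => [[y _ ->]|[/supportP z0 _]].
  split=> [|_ /imageP[i _ ->]]; last by rewrite inE.
  by apply/supportP => i; rewrite !inE negbK ffunE => /eqP ->; rewrite eqxx.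
exists z => //; apply/ffunP => i; rewrite ffunE; case: eqP => [->|//].
by rewrite z0 // !inE eqxx.
Qed.

(* If [P] is affine in the coordinate [k] with leading coefficient [Q], a zero
   of [P] at which [Q] does not vanish is determined by its other coordinates. *)
Lemma card_zeros_affine P Q k :
  (forall y c, Q (ffun_upd y k c) = Q y) ->
  (forall y, P y = y k * Q y + P (ffun_upd y k 0)) ->
  (#|[set y | P y == 0%R]| <= #|[set y | Q y == 0%R]| + #|F| ^ #|T|.-1)%N.
Proof.
move=> Qk Pk; set B := [set y | (Q y != 0) && (P y == 0)].
have PQB : [set y | P y == 0] \subset [set y | Q y == 0] :|: B.
  by apply/subsetP => y; rewrite !inE => ->; rewrite andbT; case: eqP.
apply: leq_trans (subset_leq_card PQB) _; apply: leq_trans (leq_card_setU _ _) _.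
have inj : {in B &, injective (fun y => ffun_upd y k 0)}.
  move=> y y'; rewrite !inE => /andP[Qy /eqP Py] /andP[_ /eqP Py'] eq0.
  have yk : y k * Q y = y' k * Q y.
    apply: (@addIr _ (P (ffun_upd y k 0))).
    have Qyy' : Q y = Q y' by rewrite -(Qk y 0) eq0 Qk.
    by rewrite -Pk Py eq0 Qyy' -Pk Py'.
  apply/ffunP => i; have [->|ik] := eqVneq i k; first exact: mulIf yk.
  by move/ffunP/(_ i): eq0; rewrite !ffunE (negbTE ik).
rewrite leq_add2l -(card_ffun_upd0 k) -(card_in_imset inj).
by apply/subset_leq_card/subsetP => _ /imsetP[y _ ->]; apply: imset_f.
Qed.

End AffineZeros.

Section IncidenceDeterminant.
Variable F : fieldType.

Definition det3 (a1 a2 a3 b1 b2 b3 c1 c2 c3 : F) : F :=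
  a1 * (b2 * c3 - b3 * c2) - a2 * (b1 * c3 - b3 * c1) + a3 * (b1 * c2 - b2 * c1).

Definition det4 (r1 r2 r3 r4 : F * F * F * F) : F :=
  let: (a1, a2, a3, a4) := r1 in let: (b1, b2, b3, b4) := r2 in
  let: (c1, c2, c3, c4) := r3 in let: (d1, d2, d3, d4) := r4 in
  a1 * det3 b2 b3 b4 c2 c3 c4 d2 d3 d4 - a2 * det3 b1 b3 b4 c1 c3 c4 d1 d3 d4
  + a3 * det3 b1 b2 b4 c1 c2 c4 d1 d2 d4 - a4 * det3 b1 b2 b3 c1 c2 c3 d1 d2 d3.

Definition dot4 (r u : F * F * F * F) : F :=
  let: (a1, a2, a3, a4) := r in let: (u1, u2, u3, u4) := u in
  a1 * u1 + a2 * u2 + a3 * u3 + a4 * u4.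

Lemma det4_ker r1 r2 r3 r4 u :
  dot4 r1 u = 0 -> dot4 r2 u = 0 -> dot4 r3 u = 0 -> dot4 r4 u = 0 ->
  det4 r1 r2 r3 r4 = 0 \/ u = (0, 0, 0, 0).
Proof.
case: r1 r2 r3 r4 u => [[[a1 a2] a3] a4] [[[b1 b2] b3] b4] [[[c1 c2] c3] c4]
  [[[d1 d2] d3] d4] [[[u1 u2] u3] u4].
set D := det4 _ _ _ _; rewrite /=.
set ea := a1 * u1 + _ + _ + _; set eb := b1 * u1 + _ + _ + _.
set ec := c1 * u1 + _ + _ + _; set ed := d1 * u1 + _ + _ + _.
move=> ha hb hc hd.
(* Cramer's rule: [D * u_i] is [D] with its i-th column replaced by the [e]'s. *)
have [Du1 Du2 Du3 Du4] : [/\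
    D * u1 = det4 (ea, a2, a3, a4) (eb, b2, b3, b4) (ec, c2, c3, c4) (ed, d2, d3, d4),
    D * u2 = det4 (a1, ea, a3, a4) (b1, eb, b3, b4) (c1, ec, c3, c4) (d1, ed, d3, d4),
    D * u3 = det4 (a1, a2, ea, a4) (b1, b2, eb, b4) (c1, c2, ec, c4) (d1, d2, ed, d4) &
    D * u4 = det4 (a1, a2, a3, ea) (b1, b2, b3, eb) (c1, c2, c3, ec) (d1, d2, d3, ed)].
  by rewrite /D /ea /eb /ec /ed /det4 /det3; split; ring.
have [->|D0] := eqVneq D 0; [by left | right].
have u0 v : D * v = 0 -> v = 0 by move/eqP; rewrite mulf_eq0 (negbTE D0) => /eqP.
have [] : [/\ D * u1 = 0, D * u2 = 0, D * u3 = 0 & D * u4 = 0].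
  by rewrite Du1 Du2 Du3 Du4 ha hb hc hd /det4 /det3; split; ring.
by move=> /u0 -> /u0 -> /u0 -> /u0 ->.
Qed.

Definition incidence_row (x0 x1 x2 : F) : F * F * F * F :=
  ((x2 - x0) * x1, x2 - x0, (x0 - x1) * x2, x0 - x1).

(* Every line [l] satisfies [l x0 (x1 - x2) + l x1 (x2 - x0) + l x2 (x0 - x1) = 0];
   apply this to [B], whose value at [x_i] is the value of [A_i]. *)
Lemma incidence_row_ker (A0 A1 A2 B : F * F) (x0 x1 x2 : F) :
  A0.1 * x0 + A0.2 = B.1 * x0 + B.2 ->
  A1.1 * x1 + A1.2 = B.1 * x1 + B.2 ->
  A2.1 * x2 + A2.2 = B.1 * x2 + B.2 ->
  dot4 (incidence_row x0 x1 x2) (A1.1 - A0.1, A1.2 - A0.2, A2.1 - A0.1, A2.2 - A0.2) = 0.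
Proof.
case: A0 A1 A2 B => [a0 b0] [a1 b1] [a2 b2] [a b] /= e0 e1 e2.
have -> : b0 = a * x0 + b - a0 * x0 by rewrite -e0; ring.
have -> : b1 = a * x1 + b - a1 * x1 by rewrite -e1; ring.
have -> : b2 = a * x2 + b - a2 * x2 by rewrite -e2; ring.
ring.
Qed.

(* Indices are natural numbers so that [grid_pt_upd] below decides equalities
   of concrete coordinates by computation. *)
Definition grid_pt (y : {ffun 'I_3 * 'I_4 -> F}) (i j : nat) : F := y (inord i, inord j).

Definition incidence_grid_row y j :=
  incidence_row (grid_pt y 0 j) (grid_pt y 1 j) (grid_pt y 2 j).

Definition incidence_det (y : {ffun 'I_3 * 'I_4 -> F}) : F :=
  det4 (incidence_grid_row y 0) (incidence_grid_row y 1)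
       (incidence_grid_row y 2) (incidence_grid_row y 3).

Lemma incidence_det_eq0 (A : 'I_3 -> F * F) (B : 'I_4 -> F * F) (y : {ffun 'I_3 * 'I_4 -> F}) :
  injective A -> (forall i j, (A i).1 * y (i, j) + (A i).2 = (B j).1 * y (i, j) + (B j).2) ->
  incidence_det y = 0.
Proof.
move=> injA meet.
pose u := ((A (inord 1)).1 - (A (inord 0)).1, (A (inord 1)).2 - (A (inord 0)).2,
           (A (inord 2)).1 - (A (inord 0)).1, (A (inord 2)).2 - (A (inord 0)).2).
have row_ker j : dot4 (incidence_grid_row y j) u = 0.
  exact: incidence_row_ker (meet _ _) (meet _ _) (meet _ _).
have := det4_ker (row_ker 0) (row_ker 1) (row_ker 2) (row_ker 3).
case=> [//|[/subr0_eq a10 /subr0_eq b10 _ _]].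
by have /(congr1 val)/= := injA (inord 1) (inord 0) (injective_projections _ _ a10 b10);
  rewrite !inordK.
Qed.
End IncidenceDeterminant.

Lemma grid_pt_upd (F : fieldType) (y : {ffun 'I_3 * 'I_4 -> F}) a b c i j :
  (i < 3)%N -> (j < 4)%N -> (a < 3)%N -> (b < 4)%N ->
  grid_pt (ffun_upd y (inord a, inord b) c) i j = if (i == a) && (j == b) then c else grid_pt y i j.
Proof.
move=> i3 j4 a3 b4; rewrite /grid_pt ffunE xpair_eqE.
by rewrite -!(inj_eq val_inj) /= !inordK.
Qed.

Section IncidenceZeros.
Variable F : finFieldType.
Implicit Type y : {ffun 'I_3 * 'I_4 -> F}.

Let dx0 (x1 x2 : F) : F * F * F * F := (- x1, -1, x2, 1).
Let dx2 (x0 x1 : F) : F * F * F * F := (x1, 1, x0 - x1, 0).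
Local Notation row := incidence_grid_row.
Local Notation x := grid_pt.

(* [d1], ..., [d6] are the successive leading coefficients of [incidence_det] in
   the coordinates (0,2), (2,2), (2,0), (2,1), (0,3), (1,0).  By multilinearity
   each is obtained from the previous one by differentiating a single row
   ([dx0] and [dx2] are the derivatives of [incidence_row] in its first and last
   argument); the last one is the constant 1. *)

Let d1 y := det4 (row y 0) (row y 1) (dx0 (x y 1 2) (x y 2 2)) (row y 3).
Let d2 y := det4 (row y 0) (row y 1) (0, 0, 1, 0) (row y 3).
Let d3 y := det4 (dx2 (x y 0 0) (x y 1 0)) (row y 1) (0, 0, 1, 0) (row y 3).
Let d4 y := det4 (dx2 (x y 0 0) (x y 1 0)) (dx2 (x y 0 1) (x y 1 1)) (0, 0, 1, 0) (row y 3).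
Let d5 y := det4 (dx2 (x y 0 0) (x y 1 0)) (dx2 (x y 0 1) (x y 1 1)) (0, 0, 1, 0)
                 (dx0 (x y 1 3) (x y 2 3)).
Let d6 y := det4 (1, 0, -1, 0) (dx2 (x y 0 1) (x y 1 1)) (0, 0, 1, 0) (dx0 (x y 1 3) (x y 2 3)).

Local Ltac solve_affine :=
  move=> *; unfold d1, d2, d3, d4, d5, d6, incidence_det, incidence_grid_row; cbv beta;
  rewrite !grid_pt_upd //= /det4 /det3 /incidence_row /dx0 /dx2 /grid_pt /=; ring.

Local Notation zeros P := [set y : {ffun 'I_3 * 'I_4 -> F} | P y == 0%R].

Lemma card_incidence_det_zeros : (#|zeros (@incidence_det F)| <= 6 * #|F| ^ 11)%N.
Proof.
have <- : (#|{: 'I_3 * 'I_4}|.-1 = 11)%N by rewrite card_prod !card_ord.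
set q := (#|F| ^ _)%N.
have s1 : (#|zeros (@incidence_det F)| <= #|zeros d1| + q)%N.
  by apply: (@card_zeros_affine _ _ (@incidence_det F) d1 (inord 0, inord 2)); solve_affine.
have s2 : (#|zeros d1| <= #|zeros d2| + q)%N.
  by apply: (@card_zeros_affine _ _ d1 d2 (inord 2, inord 2)); solve_affine.
have s3 : (#|zeros d2| <= #|zeros d3| + q)%N.
  by apply: (@card_zeros_affine _ _ d2 d3 (inord 2, inord 0)); solve_affine.
have s4 : (#|zeros d3| <= #|zeros d4| + q)%N.
  by apply: (@card_zeros_affine _ _ d3 d4 (inord 2, inord 1)); solve_affine.
have s5 : (#|zeros d4| <= #|zeros d5| + q)%N.
  by apply: (@card_zeros_affine _ _ d4 d5 (inord 0, inord 3)); solve_affine.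
have s6 : (#|zeros d5| <= #|zeros d6| + q)%N.
  by apply: (@card_zeros_affine _ _ d5 d6 (inord 1, inord 0)); solve_affine.
have d6_1 y : d6 y = 1 by rewrite /d6 /det4 /det3 /dx0 /dx2 /=; ring.
have : #|zeros d6| = 0%N.
  by apply: eq_card0 => y; rewrite !inE d6_1 oner_eq0.
lia.
Qed.
End IncidenceZeros.

Lemma sum_nat_indicator (T : finType) (A : {set T}) (P : pred T) :
  (\sum_(x in A) (P x : nat) = #|[set x in A | P x]|)%N.
Proof.
rewrite -sum1_card big_mkcond [RHS]big_mkcond /=; apply: eq_bigr => x _; rewrite inE.
by case: (x \in A); case: (P x).
Qed.

Section LineGraph.
Variable p : nat.
Local Notation F := ('F_p : finFieldType).
Local Notation line := (F * F)%type.

Definition meets (l1 l2 : line) (x : F) := l1.1 * x + l1.2 == l2.1 * x + l2.2.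

Lemma meets_sym l1 l2 x : meets l1 l2 x = meets l2 l1 x.
Proof. by rewrite /meets eq_sym. Qed.

Lemma meets_uniq l1 l2 x x' : l1 != l2 -> meets l1 l2 x -> meets l1 l2 x' -> x = x'.
Proof.
case: l1 l2 => [a1 b1] [a2 b2] l12 /eqP /= e /eqP /= e'.
have [a12|a12] := eqVneq a1 a2.
  by rewrite a12 in l12 e; move/addrI: e => b12; rewrite b12 eqxx in l12.
have solve z : a1 * z + b1 = a2 * z + b2 -> (a1 - a2) * z = b2 - b1.
  by move=> ez; apply/eqP; rewrite -subr_eq0 -(subrr (a2 * z + b2)) -{1}ez; apply/eqP; ring.
have a12' : a1 - a2 != 0 by rewrite subr_eq0.
by apply: (mulfI a12'); rewrite (solve x e) (solve x' e').
Qed.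

Variables (L : {set line}) (X : {set F}).
Hypothesis XI : X \subset Ipts L.

(* The graph on [L] with one edge per point [x] of [X], joining a chosen pair
   of distinct lines of [L] through [x]. *)
Definition edge (x : F) : line * line :=
  odflt ((0, 0), (0, 0))
    [pick e : line * line | [&& e.1 \in L, e.2 \in L, e.1 != e.2 & meets e.1 e.2 x]].

Lemma edgeP x : x \in X ->
  [/\ (edge x).1 \in L, (edge x).2 \in L, (edge x).1 != (edge x).2 & meets (edge x).1 (edge x).2 x].
Proof.
move/(subsetP XI); rewrite inE => /exists_inP[l1 l1L /exists_inP[l2 l2L /andP[l12 m]]].
rewrite /edge; case: pickP => [e /and4P[] //|/(_ (l1, l2))].
by rewrite /= l1L l2L l12 /meets m.
Qed.

Lemma edge_inj : {in X &, injective edge}.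
Proof.
move=> x x' xX x'X e; have [_ _ l12 m] := edgeP xX; have [_ _ _ m'] := edgeP x'X.
by rewrite -e in m'; apply: meets_uniq l12 m m'.
Qed.

Definition edges_at (l : line) := [set x in X | ((edge x).1 == l) || ((edge x).2 == l)].

Definition other_end (l : line) (x : F) := if (edge x).1 == l then (edge x).2 else (edge x).1.

Lemma edges_atP l x : x \in edges_at l ->
  [/\ x \in X, l \in L, other_end l x \in L, other_end l x != l & meets l (other_end l x) x].
Proof.
rewrite inE => /andP[xX lx]; have [e1L e2L e12 m] := edgeP xX.
rewrite /other_end; case: eqP lx => [<- _|_ /= /eqP <-]; split => //.
- by rewrite eq_sym.
- by rewrite meets_sym.
Qed.

Lemma other_end_inj l : {in edges_at l &, injective (other_end l)}.
Proof.
move=> x x' lx lx' e; have [_ _ _ ol m] := edges_atP lx; have [_ _ _ _ m'] := edges_atP lx'.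
by rewrite -e in m'; apply: meets_uniq m m'; rewrite eq_sym.
Qed.

Lemma edges_at_shared l l' x : x \in edges_at l -> x \in edges_at l' ->
  l' = l \/ l' = other_end l x.
Proof.
rewrite !inE /other_end => /andP[_ lx] /andP[_ l'x].
by case: eqP lx => [<-|_ /= /eqP <-]; case/orP: l'x => /eqP ->; auto.
Qed.

Lemma sum_card_edges_at : (\sum_(l in L) #|edges_at l| = 2 * #|X|)%N.
Proof.
under eq_bigr => l _ do rewrite -sum_nat_indicator.
rewrite exchange_big /= mulnC -sum_nat_const; apply: eq_bigr => x xX.
have [e1L e2L e12 _] := edgeP xX.
rewrite (bigD1 (edge x).1) //= eqxx (bigD1 (edge x).2) /=; last by rewrite e2L eq_sym e12.
rewrite eqxx orbT big1 // => l /andP[/andP[_ l1] l2].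
by rewrite eq_sym (negbTE l1) eq_sym (negbTE l2).
Qed.

Lemma card_le_sqr : (#|X| <= #|L| ^ 2)%N.
Proof.
rewrite -(card_in_imset edge_inj) expnS expn1 -cardsX; apply: subset_leq_card.
apply/subsetP => _ /imsetP[x xX ->]; have [e1L e2L _ _] := edgeP xX.
by rewrite [edge x]surjective_pairing in_setX e1L e2L.
Qed.

Definition adjacent (l u : line) := [exists x in edges_at l, other_end l x == u].

Definition common_nbhd (U : {set line}) := [set l in L | [forall u in U, adjacent l u]].

Definition triples_adjacent_to (l : line) :=
  [set U : {set line} | [&& U \subset L, #|U| == 3%N & [forall u in U, adjacent l u]]].

Lemma bin3_edges_at_le l : l \in L -> ('C(#|edges_at l|, 3) <= #|triples_adjacent_to l|)%N.
Proof.
move=> lL; rewrite -cards_draws.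
have mem_other (A : {set F}) z : A \subset edges_at l -> z \in edges_at l ->
    (other_end l z \in other_end l @: A) = (z \in A).
  move=> Al zl; apply/imsetP/idP => [[z' z'A e]|]; last by exists z.
  by rewrite (other_end_inj zl (subsetP Al _ z'A) e).
have im_inj : {in [set A : {set F} | A \subset edges_at l & #|A| == 3%N] &,
    injective (fun A : {set F} => other_end l @: A)}.
  move=> A A'; rewrite !inE => /andP[Al _] /andP[A'l _] eA; apply/setP => z.
  have [zl|zl] := boolP (z \in edges_at l); first by rewrite -mem_other // eA mem_other.
  by rewrite (contraNF (subsetP Al z) zl) (contraNF (subsetP A'l z) zl).
rewrite -(card_in_imset im_inj); apply/subset_leq_card/subsetP => U /imsetP[A].
rewrite inE => /andP[Al /eqP A3] ->; rewrite inE card_in_imset ?A3 /=; last first.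
  by move=> x x' /(subsetP Al) + /(subsetP Al); apply: other_end_inj.
apply/andP; split.
  by apply/subsetP => _ /imsetP[x /(subsetP Al)/edges_atP[] _ _ + _ _ ->].
apply/forall_inP => _ /imsetP[x xA ->]; apply/exists_inP.
by exists x; [apply: (subsetP Al) | rewrite eqxx].
Qed.

Lemma sum_bin3_edges_at_le :
  (forall U : {set line}, U \subset L -> #|U| = 3%N -> (#|common_nbhd U| <= 3)%N) ->
  (\sum_(l in L) 'C(#|edges_at l|, 3) <= 3 * 'C(#|L|, 3))%N.
Proof.
move=> K34free; apply: (@leq_trans (\sum_(l in L) #|triples_adjacent_to l|)).
  by apply: leq_sum => l; apply: bin3_edges_at_le.
rewrite -cards_draws; set T3 := [set U : {set line} | U \subset L & #|U| == 3%N].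
rewrite (eq_bigr (fun l => \sum_(U in T3) (l \in common_nbhd U : nat))); last first.
  move=> l lL; rewrite sum_nat_indicator; apply: eq_card => U.
  by rewrite !inE lL andbA.
rewrite exchange_big /= mulnC -sum_nat_const; apply: leq_sum => U.
rewrite inE => /andP[UL /eqP U3]; rewrite sum_nat_indicator.
apply: leq_trans (K34free U UL U3); apply/subset_leq_card/subsetP => l.
by rewrite inE => /andP[].
Qed.

End LineGraph.

Section K34.
Variable p : nat.
Local Notation F := ('F_p : finFieldType).
Local Notation line := (F * F)%type.

Lemma K34_incidence (S : {set F}) (L : {set line}) :
  (0 < #|S :&: Ipts L|)%N -> (4 * #|L| ^ 5 <= #|S :&: Ipts L| ^ 3)%N ->
  exists (A : 'I_3 -> line) (B : 'I_4 -> line) (x : 'I_3 * 'I_4 -> F),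
    [/\ injective A, injective x, forall ij, x ij \in S
      & forall i j, meets (A i) (B j) (x (i, j))].
Proof.
set X := S :&: Ipts L => X0 X4; have XI : X \subset Ipts L by apply: subsetIr.
have /existsP[U /and3P[UL /eqP U3 CN4]] :
    [exists U : {set line}, [&& U \subset L, #|U| == 3%N & (3 < #|common_nbhd L X U|)%N]].
  apply: contraTT (sum_bin3_gt (sum_card_edges_at XI) X0 (card_le_sqr XI) X4).
  move/existsPn => K34free; rewrite -leqNgt; apply: sum_bin3_edges_at_le => // U UL U3.
  by move: (K34free U); rewrite UL U3 eqxx /= -leqNgt.
pose A i := enum_val (cast_ord (esym U3) i).
pose B j := enum_val (widen_ord CN4 j).
have AU i : A i \in U by apply: enum_valP.
have BCN j : B j \in common_nbhd L X U by apply: enum_valP.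
pose x ij := odflt 0 [pick z in edges_at L X (B ij.2) | other_end L (B ij.2) z == A ij.1].
have xP i j : x (i, j) \in edges_at L X (B j) /\ other_end L (B j) (x (i, j)) = A i.
  have := BCN j; rewrite inE => /andP[_ /forall_inP/(_ _ (AU i))/exists_inP[z zB /eqP zA]].
  rewrite /x /=; case: pickP => [z' /andP[z'B /eqP z'A] // | /(_ z)].
  by rewrite zB zA eqxx.
have BU j : B j \notin U.
  apply/negP => BjU; have := BCN j; rewrite inE => /andP[_ /forall_inP/(_ _ BjU)].
  by case/exists_inP => z /(edges_atP XI)[_ _ _ ne _] /eqP oz; rewrite oz eqxx in ne.
exists A, B, x; split.
- by move=> i i' /enum_val_inj/cast_ord_inj.
- move=> [i j] [i' j'] e; have [xB xA] := xP i j; have [+ xA'] := xP i' j'.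
  rewrite -e => xB'.
  case: (edges_at_shared xB xB') => [/enum_val_inj/(congr1 val)/= /val_inj ej|eB].
    by rewrite -e ej xA in xA'; move/enum_val_inj/cast_ord_inj: xA' => ->; rewrite ej.
  by have := BU j'; rewrite eB xA AU.
- by move=> [i j]; have [/(edges_atP XI)[] + _ _ _ _ _] := xP i j; rewrite inE => /andP[].
- move=> i j; have [/(edges_atP XI)[_ _ _ _ m] <-] := xP i j; by rewrite meets_sym.
Qed.
End K34.

Section KwiseUniform.
Variables (R : realType) (p N : nat) (mu : {ffun 'I_N -> 'F_p} -> R).

Definition select (T : finType) (w : {ffun 'I_N -> 'F_p}) (f : T -> 'I_N) : {ffun T -> 'F_p} :=
  [ffun t => w (f t)].

Lemma kwise_uniform_select k (T : finType) (f : T -> 'I_N) (y : {ffun T -> 'F_p}) :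
  kwise_uniform k mu -> injective f -> (#|T| <= k)%N ->
  \sum_(w | select w f == y) mu w = ((p%:R : R) ^+ #|T|)^-1.
Proof.
move=> kw finj Tk.
pose a := [ffun i => if [pick t | f t == i] is Some t then y t else 0].
have aE t : a (f t) = y t.
  by rewrite ffunE; case: pickP => [t' /eqP/finj -> //|/(_ t)]; rewrite eqxx.
rewrite -cardsT -(card_imset _ finj) -(kw _ a); last by rewrite card_imset // cardsT.
apply: eq_bigl => w; apply/eqP/forall_inP => [wy _ /imsetP[t _ ->]|wa].
  by rewrite aE -wy ffunE.
by apply/ffunP => t; rewrite ffunE -aE; apply/eqP/wa/imset_f.
Qed.

(* Union bound over the injective index maps [f]: each [select w f] is
   uniformly distributed. *)
Lemma prob_select_in_le (T : finType) (Y : {set {ffun T -> 'F_p}}) :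
  (forall w, 0 <= mu w) -> kwise_uniform #|T| mu ->
  \sum_(w | [exists f : {ffun T -> 'I_N}, injectiveb f && (select w f \in Y)]) mu w
    <= #|Y|%:R * (N%:R : R) ^+ #|T| / (p%:R : R) ^+ #|T|.
Proof.
move=> mu0 kw; set q := ((p%:R : R) ^+ #|T|)^-1.
have sel_f f : injective f -> \sum_(w | select w f \in Y) mu w = #|Y|%:R * q.
  move=> finj; rewrite (partition_big (fun w => select w f) (mem Y)) //=.
  rewrite mulr_natl -sumr_const; apply: eq_bigr => y yY.
  rewrite /q -(kwise_uniform_select y kw finj (leqnn _)); apply: eq_bigl => w.
  by case: eqP => [->|]; rewrite ?yY ?andbF.
apply: (@le_trans _ _ (\sum_w \sum_(f : {ffun T -> 'I_N} | injectiveb f)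
    (if select w f \in Y then mu w else 0))).
  rewrite [X in X <= _]big_mkcond; apply: ler_sum => w _.
  case: ifP => [/existsP[f0 /andP[f0inj f0Y]]|_]; last by apply: sumr_ge0 => f _; case: ifP.
  by rewrite (bigD1 f0) //= f0Y lerDl; apply: sumr_ge0 => f _; case: ifP.
rewrite exchange_big /= (eq_bigr (fun _ => #|Y|%:R * q)); last first.
  by move=> f /injectiveP finj; rewrite -big_mkcond sel_f.
have q0 : 0 <= #|Y|%:R * q by rewrite mulr_ge0 ?invr_ge0 ?exprn_ge0.
apply: (@le_trans _ _ (\sum_(f : {ffun T -> 'I_N}) #|Y|%:R * q)).
  by rewrite [X in _ <= X](bigID (fun f : {ffun T -> 'I_N} => injectiveb f)) /= lerDl sumr_ge0.
by rewrite sumr_const card_ffun card_ord [X in _ <= X]mulrAC -natrX mulr_natr.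
Qed.
End KwiseUniform.

Lemma Calpha_attained (R : realType) p (alpha : R) (S : {set 'F_p}) :
  alpha <= 1 -> exists2 L, alpha_good alpha S L & #|L| = Calpha alpha S.
Proof.
move=> a1.
have goodT : alpha_good alpha S [set: 'F_p * 'F_p].
  rewrite /alpha_good; suff -> : S :&: Ipts [set: 'F_p * 'F_p] = S.
    by rewrite -[X in _ <= X]mul1r ler_wpM2r.
  apply/setIidPl/subsetP => z _; rewrite inE.
  apply/exists_inP; exists (1, 0); rewrite ?inE //.
  apply/exists_inP; exists (0, z); first by rewrite inE.
  by rewrite /= mul1r mul0r addr0 add0r eqxx.
rewrite /Calpha; elim/big_rec: _ => [|L c gL [L' gL' <-]]; first by exists [set: 'F_p * 'F_p].
have [LL'|/ltnW L'L] := leqP #|L| #|L'|.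
  by exists L => //; apply/esym/minn_idPl.
by exists L' => //; apply/esym/minn_idPr.
Qed.

Lemma complexity_bound_nat (R : realType) (m E : nat) (t : R) :
  0 < t -> t <= E%:R -> (m%:R : R) <= (t / 4 `^ 3^-1) `^ (3 / 5) -> (4 * m ^ 5 <= E ^ 3)%N.
Proof.
move=> t0 tE mb; rewrite -(ler_nat R) natrM !natrX.
have c3 : (4 : R) `^ 3^-1 ^+ 3 = 4.
  by rewrite -powR_mulrn ?powR_ge0 // -powRrM mulVf ?powRr1 // pnatr_eq0.
have b0 : 0 <= t / 4 `^ 3^-1 by rewrite divr_ge0 ?powR_ge0 ?ltW.
have m5 : (m%:R : R) ^+ 5 <= t ^+ 3 / 4.
  have := ge0_ler_powR (ler0n R 5) (ler0n R m) (powR_ge0 _ _) mb.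
  rewrite powR_mulrn ?ler0n // -powRrM (_ : 3 / 5 * 5%:R = 3%:R); last by field.
  by rewrite powR_mulrn // exprMn exprVn c3.
have t3 : t ^+ 3 <= E%:R ^+ 3 by rewrite lerXn2r // nnegrE ltW // (lt_le_trans t0).
nra.
Qed.

Lemma incidence_zero_of_small_complexity (R : realType) p N (alpha : R) (w : {ffun 'I_N -> 'F_p}) :
  0 < alpha -> alpha <= 1 -> (0 < N)%N ->
  (Calpha alpha (setS w))%:R <= (alpha * #|setS w|%:R / 4 `^ 3^-1) `^ (3 / 5) ->
  [exists f : {ffun 'I_3 * 'I_4 -> 'I_N},
     injectiveb f && (select w f \in [set y | incidence_det y == 0])].
Proof.
set S := setS w => a0 a1 N0; have [L gL <-] := Calpha_attained S a1 => small.
have S0 : (0 < #|S|)%N by apply/card_gt0P; exists (w (Ordinal N0)); apply: imset_f.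
have t0 : 0 < alpha * #|S|%:R by rewrite mulr_gt0 ?ltr0n.
have E0 : (0 < #|S :&: Ipts L|)%N by rewrite -(ltr0n R); apply: lt_le_trans gL.
have [A [B [x [Ainj xinj xS meet]]]] := K34_incidence E0 (complexity_bound_nat t0 gL small).
have idx ij : exists i, w i == x ij by have /imsetP[i _ ->] := xS ij; exists i.
pose f := [ffun ij => xchoose (idx ij)].
have wf ij : w (f ij) = x ij by rewrite ffunE; apply/eqP; exact: (xchooseP (idx ij)).
apply/existsP; exists f; apply/andP; split.
  by apply/injectiveP => ij ij' /(congr1 w); rewrite !wf => /xinj.
by rewrite inE; apply/eqP/(incidence_det_eq0 Ainj) => i j; rewrite ffunE wf; apply/eqP/meet.
Qed.

Lemma prob_small_complexity_le (R : realType) p N (alpha : R) (mu : {ffun 'I_N -> 'F_p} -> R) :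
  prime p -> 0 < alpha -> alpha <= 1 -> (0 < N)%N ->
  (forall w, 0 <= mu w) -> kwise_uniform 12 mu ->
  \sum_(w | (Calpha alpha (setS w))%:R <= (alpha * #|setS w|%:R / 4 `^ 3^-1) `^ (3 / 5)) mu w
    <= 6 * (N%:R : R) ^+ 12 / p%:R.
Proof.
move=> pp a0 a1 N0 mu0 kw.
pose Z := [set y : {ffun 'I_3 * 'I_4 -> 'F_p} | incidence_det y == 0].
have kw12 : kwise_uniform #|{: 'I_3 * 'I_4}| mu by rewrite card_prod !card_ord.
apply: le_trans (le_trans _ (prob_select_in_le Z mu0 kw12)) _.
  rewrite [X in X <= _]big_mkcond [X in _ <= X]big_mkcond; apply: ler_sum => w _.
  by case: ifPn => [/incidence_zero_of_small_complexity-> //|_]; case: ifP.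
have card_Z : (#|Z|%:R : R) <= 6 * p%:R ^+ 11.
  rewrite -natrX -natrM ler_nat.
  by have := card_incidence_det_zeros ('F_p : finFieldType); rewrite card_Fp.
have p0 : (p%:R : R) != 0 by rewrite pnatr_eq0 -lt0n prime_gt0.
rewrite card_prod !card_ord; apply: le_trans (_ : _ <= 6 * p%:R ^+ 11 * N%:R ^+ 12 / p%:R ^+ 12) _.
  by rewrite ler_wpM2r ?invr_ge0 ?exprn_ge0 ?ler_wpM2r ?exprn_ge0.
by rewrite le_eqVlt; apply/orP; left; apply/eqP; field.
Qed.

Unset Implicit Arguments.

Theorem theorem9 (R : realType) (p N : nat) (eps alpha : R)
  (mu : {ffun 'I_N -> 'F_p} -> R) :
  prime p -> 0 < eps -> 0 < alpha -> alpha <= 1 ->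
  (0 < N)%N -> (N%:R : R) = (p%:R : R) `^ (12^-1 - eps) ->
  is_distribution mu -> kwise_uniform 12 mu ->
  1 - 6 * (p%:R : R) `^ (- (12 * eps)) <=
  \sum_(w : {ffun 'I_N -> 'F_p} | (Calpha alpha (setS w))%:R >
             (alpha * (#|setS w|%:R) / (4 : R) `^ (3^-1)) `^ (3 / 5)) mu w.
Proof.
move=> pp _ a0 a1 N0 hN [mu0 mu1] kw.
set q := (p%:R : R) `^ (- (12 * eps)).
have p0 : (p%:R : R) != 0 by rewrite pnatr_eq0 -lt0n prime_gt0.
have N12 : (N%:R : R) ^+ 12 / p%:R = q.
  have n12 : (12 : R) != 0 by rewrite pnatr_eq0.
  rewrite hN -powR_mulrn ?powR_ge0 // -powRrM.
  rewrite (_ : (12^-1 - eps) * 12%:R = 1 + - (12 * eps)); last by field.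
  by rewrite powRD ?p0 ?implybT // powRr1 ?ler0n // mulrAC mulfV ?mul1r.
pose good (w : {ffun 'I_N -> 'F_p}) :=
  (alpha * #|setS w|%:R / 4 `^ 3^-1) `^ (3 / 5) < (Calpha alpha (setS w))%:R.
change (1 - 6 * q <= \sum_(w | good w) mu w).
have split : \sum_w mu w = \sum_(w | good w) mu w +
    \sum_(w | (Calpha alpha (setS w))%:R <= (alpha * #|setS w|%:R / 4 `^ 3^-1) `^ (3 / 5)) mu w.
  by rewrite (bigID good); congr (_ + _); apply: eq_bigl => w; rewrite /good -leNgt.
have := prob_small_complexity_le pp a0 a1 N0 mu0 kw; rewrite -mulrA N12.
lra.
Qed.
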